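(* Let $\Omega\subset\mathbb{R}^2$ be a bounded domain and $u,v\in C^{2}(\Omega)\cap C^0(\bar\Omega)$. For $w\in\{u,v\}$ let $S(w)=\{(x,y)\in\Omega:w_x-y=0,\ w_y+x=0\}$ and $N(w)=(w_x-y,w_y+x)/\sqrt{(w_x-y)^2+(w_y+x)^2}$ on $\Omega\setminus S(w)$. Suppose $N(u)=N(v)$ in $\Omega\setminus(S(u)\cup S(v))$ and $u=v$ on $\partial\Omega$. Then $u=v$ in $\Omega$. *)

From Stdlib Require Import Reals.
From Coquelicot Require Import Coquelicot.
Open Scope R_scope.

Definition pt := (R * R)%type.

Definition dist2 (p q : pt) : R :=
  sqrt ((fst p - fst q)^2 + (snd p - snd q)^2).

Definition open2 (O : pt -> Prop) : Prop :=
  forall p, O p -> exists r, 0 < r /\ forall q, dist2 p q < r -> O q.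

Definition connected2 (O : pt -> Prop) : Prop :=
  forall U V : pt -> Prop, open2 U -> open2 V ->
    (forall p, O p -> U p \/ V p) ->
    (exists p, O p /\ U p) -> (exists p, O p /\ V p) ->
    exists p, O p /\ U p /\ V p.

Definition bounded2 (O : pt -> Prop) : Prop :=
  exists M, forall p, O p -> Rabs (fst p) <= M /\ Rabs (snd p) <= M.

Definition domain2 (O : pt -> Prop) : Prop :=
  (exists p, O p) /\ open2 O /\ connected2 O.

Definition closure2 (O : pt -> Prop) (p : pt) : Prop :=
  forall eps, 0 < eps -> exists q, O q /\ dist2 p q < eps.

Definition boundary2 (O : pt -> Prop) (p : pt) : Prop :=
  closure2 O p /\ ~ O p.

Definition dx (f : pt -> R) (p : pt) : R := Derive (fun t => f (t, snd p)) (fst p).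
Definition dy (f : pt -> R) (p : pt) : R := Derive (fun t => f (fst p, t)) (snd p).
Definition ex_dx (f : pt -> R) (p : pt) : Prop := ex_derive (fun t => f (t, snd p)) (fst p).
Definition ex_dy (f : pt -> R) (p : pt) : Prop := ex_derive (fun t => f (fst p, t)) (snd p).

Definition cont_within (A : pt -> Prop) (f : pt -> R) (p : pt) : Prop :=
  forall eps, 0 < eps -> exists delta, 0 < delta /\
    forall q, A q -> dist2 p q < delta -> Rabs (f q - f p) < eps.

Definition cont_at (f : pt -> R) (p : pt) : Prop := cont_within (fun _ => True) f p.

Definition C2_on (O : pt -> Prop) (f : pt -> R) : Prop :=
  forall p, O p ->
    ex_dx f p /\ ex_dy f p /\
    ex_dx (dx f) p /\ ex_dy (dx f) p /\ ex_dx (dy f) p /\ ex_dy (dy f) p /\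
    cont_at f p /\ cont_at (dx f) p /\ cont_at (dy f) p /\
    cont_at (dx (dx f)) p /\ cont_at (dy (dx f)) p /\
    cont_at (dx (dy f)) p /\ cont_at (dy (dy f)) p.

Definition C0_closure (O : pt -> Prop) (f : pt -> R) : Prop :=
  forall p, closure2 O p -> cont_within (closure2 O) f p.

Definition Sset (w : pt -> R) (p : pt) : Prop :=
  dx w p - snd p = 0 /\ dy w p + fst p = 0.

Definition Nfield (w : pt -> R) (p : pt) : R * R :=
  let a := dx w p - snd p in
  let b := dy w p + fst p in
  (a / sqrt (a^2 + b^2), b / sqrt (a^2 + b^2)).

(* Write w = u - v and F(u) = (u_x - y, u_y + x); the hypothesis N(u) = N(v) says that
   F(u) and F(v) are parallel.  For a C^1 function phi >= 0 vanishing near 0, the field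
   phi(w) (F_2(u), -F_1(u)) has divergence
   phi'(w) (F_1(u) F_2(v) - F_2(u) F_1(v)) + phi(w) (u_yx - u_xy + 2) = 2 phi(w),
   and it vanishes near the boundary of Omega, where w is continuous and zero.  Its
   integral over a square containing Omega is therefore 0, so phi(w) = 0 in Omega.
   With phi(t) = max(0, t - e)^2 this gives u - v <= e for every e > 0, and exchanging
   u and v gives u = v.  The integral over the square is computed one vertical slice at
   a time, so only one-variable calculus is needed. *)

From Stdlib Require Import Reals Lra Classical ClassicalEpsilon.
From Coquelicot Require Import Coquelicot.
Open Scope R_scope.

Lemma dist2_le_abs (p q : pt) :
  dist2 p q <= Rabs (fst p - fst q) + Rabs (snd p - snd q).
Proof.
  unfold dist2.
  pose proof (Rabs_pos (fst p - fst q)); pose proof (Rabs_pos (snd p - snd q)).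
  rewrite <- sqrt_pow2 by lra.
  apply sqrt_le_1_alt.
  rewrite <- (pow2_abs (fst p - fst q)), <- (pow2_abs (snd p - snd q)).
  nra.
Qed.

Lemma dist2_diag (p : pt) : dist2 p p = 0.
Proof.
  unfold dist2. rewrite !Rminus_diag. replace (0 ^ 2 + 0 ^ 2) with 0 by ring.
  exact sqrt_0.
Qed.

Lemma locally_2d_of_ball (P : pt -> Prop) x y r : 0 < r ->
  (forall q, dist2 (x, y) q < r -> P q) -> locally_2d (fun a b => P (a, b)) x y.
Proof.
  intros r_pos ball_P. exists (mkposreal (r / 2) ltac:(lra)); simpl.
  intros a b Ha Hb. apply ball_P.
  eapply Rle_lt_trans; [apply dist2_le_abs|]; simpl.
  rewrite Rabs_minus_sym in Ha, Hb. lra.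
Qed.

Lemma locally_of_ball_along (l : R -> pt) (P : pt -> Prop) t r : 0 < r ->
  (forall s, dist2 (l t) (l s) <= Rabs (s - t)) ->
  (forall q, dist2 (l t) q < r -> P q) -> locally t (fun s => P (l s)).
Proof.
  intros r_pos l_lip ball_P. exists (mkposreal r r_pos). intros s Hs.
  apply ball_P. eapply Rle_lt_trans; [apply l_lip | exact Hs].
Qed.

Lemma dist2_along_fst x y s : dist2 (x, y) (s, y) <= Rabs (s - x).
Proof.
  eapply Rle_trans; [apply dist2_le_abs|]; simpl.
  rewrite Rminus_diag, Rabs_R0, Rabs_minus_sym. lra.
Qed.

Lemma dist2_along_snd x y s : dist2 (x, y) (x, s) <= Rabs (s - y).
Proof.
  eapply Rle_trans; [apply dist2_le_abs|]; simpl.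
  rewrite Rminus_diag, Rabs_R0, Rabs_minus_sym. lra.
Qed.

Lemma continuity_2d_pt_of_cont_at (f : pt -> R) x y :
  cont_at f (x, y) -> continuity_2d_pt (fun a b => f (a, b)) x y.
Proof.
  intros f_cont eps. destruct (f_cont eps (cond_pos eps)) as [d [d_pos Hd]].
  apply (locally_2d_of_ball (fun q => Rabs (f q - f (x, y)) < eps) x y d d_pos).
  intros q Hq. exact (Hd q I Hq).
Qed.

Lemma continuity_2d_pt_slice (f : R -> R -> R) x y :
  continuity_2d_pt f x y -> continuous (fun t => f x t) y.
Proof.
  intros f_cont. apply filterlim_locally. intros eps.
  exact (locally_2d_1d_const_x (fun a b => Rabs (f a b - f x y) < eps) x y (f_cont eps)).
Qed.

Lemma ex_RInt_slice (f : R -> R -> R) x a b :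
  (forall y, continuity_2d_pt f x y) -> ex_RInt (fun t => f x t) a b.
Proof.
  intros f_cont. apply (ex_RInt_continuous (V := R_CompleteNormedModule)).
  intros t _. apply continuity_2d_pt_slice, f_cont.
Qed.

(* u and v are arbitrary outside the closure of O, so fields built from them are
   extended by zero off O. *)
Definition zero_ext (O : pt -> Prop) (f : pt -> R) (p : pt) : R :=
  if excluded_middle_informative (O p) then f p else 0.

Definition vanishes_near_compl (O : pt -> Prop) (f : pt -> R) : Prop :=
  forall p, ~ O p -> exists r, 0 < r /\ forall q, O q -> dist2 p q < r -> f q = 0.

Lemma zero_ext_in O f p : O p -> zero_ext O f p = f p.
Proof. intros Op. unfold zero_ext. destruct excluded_middle_informative; tauto. Qed.

Lemma zero_ext_out O f p : ~ O p -> zero_ext O f p = 0.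
Proof. intros Op. unfold zero_ext. destruct excluded_middle_informative; tauto. Qed.

Lemma zero_ext_near_in O f p : open2 O -> O p ->
  exists r, 0 < r /\ forall q, dist2 p q < r -> zero_ext O f q = f q.
Proof.
  intros O_open Op. destruct (O_open p Op) as [r [r_pos ball_O]].
  exists r. split; [exact r_pos|]. intros q Hq. apply zero_ext_in, ball_O, Hq.
Qed.

Lemma zero_ext_near_out O f p : vanishes_near_compl O f -> ~ O p ->
  exists r, 0 < r /\ forall q, dist2 p q < r -> zero_ext O f q = 0.
Proof.
  intros f_van Op. destruct (f_van p Op) as [r [r_pos ball_f]].
  exists r. split; [exact r_pos|]. intros q Hq. unfold zero_ext.
  destruct excluded_middle_informative as [Oq|]; [exact (ball_f q Oq Hq) | reflexivity].
Qed.

Lemma continuity_2d_pt_zero_ext O f x y : open2 O -> vanishes_near_compl O f ->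
  (forall a b, O (a, b) -> continuity_2d_pt (fun a b => f (a, b)) a b) ->
  continuity_2d_pt (fun a b => zero_ext O f (a, b)) x y.
Proof.
  intros O_open f_van f_cont.
  destruct (excluded_middle_informative (O (x, y))) as [Op|Op].
  - destruct (zero_ext_near_in O f _ O_open Op) as [r [r_pos Hr]].
    apply (continuity_2d_pt_ext_loc (fun a b => f (a, b))); [|exact (f_cont x y Op)].
    apply (locally_2d_of_ball (fun q => f q = zero_ext O f q) x y r r_pos).
    intros q Hq. symmetry. exact (Hr q Hq).
  - destruct (zero_ext_near_out O f _ f_van Op) as [r [r_pos Hr]].
    apply (continuity_2d_pt_ext_loc (fun _ _ => 0)); [|apply continuity_2d_pt_const].
    apply (locally_2d_of_ball (fun q => 0 = zero_ext O f q) x y r r_pos).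
    intros q Hq. symmetry. exact (Hr q Hq).
Qed.

Lemma is_derive_zero_ext_along O (f g : pt -> R) (l : R -> pt) t :
  open2 O -> vanishes_near_compl O f ->
  (forall s, dist2 (l t) (l s) <= Rabs (s - t)) ->
  (O (l t) -> is_derive (fun s => f (l s)) t (g (l t))) ->
  is_derive (fun s => zero_ext O f (l s)) t (zero_ext O g (l t)).
Proof.
  intros O_open f_van l_lip f_der.
  destruct (excluded_middle_informative (O (l t))) as [Op|Op].
  - destruct (zero_ext_near_in O f _ O_open Op) as [r [r_pos Hr]].
    rewrite zero_ext_in by exact Op.
    apply (is_derive_ext_loc (fun s => f (l s))); [|exact (f_der Op)].
    apply (locally_of_ball_along l (fun q => f q = zero_ext O f q) t r r_pos l_lip).
    intros q Hq. symmetry. exact (Hr q Hq).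
  - destruct (zero_ext_near_out O f _ f_van Op) as [r [r_pos Hr]].
    rewrite zero_ext_out by exact Op.
    apply (is_derive_ext_loc (fun _ => 0)); [|apply (is_derive_const (V := R_NormedModule))].
    apply (locally_of_ball_along l (fun q => 0 = zero_ext O f q) t r r_pos l_lip).
    intros q Hq. symmetry. exact (Hr q Hq).
Qed.

Lemma nondecreasing_equal_ends_derive_eq0 (h dh : R -> R) a b x :
  (forall z, is_derive h z (dh z)) -> (forall z, 0 <= dh z) ->
  h a = h b -> a < x < b -> dh x = 0.
Proof.
  intros h_der dh_ge0 hab x_in.
  assert (h_cont : forall z, continuity_pt h z).
  { intros z. apply continuity_pt_filterlim.
    exact (ex_derive_continuous h z (ex_intro _ _ (h_der z))). }
  assert (h_incr : forall s z, s <= z -> h s <= h z).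
  { intros s z Hsz.
    destruct (MVT_gen h s z dh) as [c [_ Hc]]; [intros; apply h_der | intros; apply h_cont |].
    assert (Hzs : 0 <= z - s) by lra.
    pose proof (Rmult_le_pos _ _ (dh_ge0 c) Hzs). lra. }
  assert (h_const : forall z, a < z < b -> h z = h a).
  { intros z [Haz Hzb]. pose proof (h_incr a z ltac:(lra)). pose proof (h_incr z b ltac:(lra)).
    lra. }
  assert (h_der0 : is_derive h x 0).
  { apply (is_derive_ext_loc (fun _ => h a)).
    - exists (mkposreal (Rmin (x - a) (b - x)) ltac:(apply Rmin_pos; lra)). intros z Hz.
      change (Rabs (z - x) < Rmin (x - a) (b - x)) in Hz.
      pose proof (Rmin_l (x - a) (b - x)); pose proof (Rmin_r (x - a) (b - x)).
      apply Rabs_def2 in Hz. symmetry. apply h_const. lra.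
    - apply (is_derive_const (V := R_NormedModule)). }
  rewrite <- (is_derive_unique _ _ _ (h_der x)). exact (is_derive_unique _ _ _ h_der0).
Qed.

Lemma RInt_nonneg_eq0 (g : R -> R) a b y :
  (forall t, continuous g t) -> (forall t, 0 <= g t) ->
  RInt g a b = 0 -> a < y < b -> g y = 0.
Proof.
  intros g_cont g_ge0 g_int y_in.
  assert (g_ex : forall c d, ex_RInt g c d).
  { intros c d. apply (ex_RInt_continuous (V := R_CompleteNormedModule)).
    intros t _. apply g_cont. }
  apply (nondecreasing_equal_ends_derive_eq0 (fun z => RInt g a z) g a b); auto.
  - intros z. apply (is_derive_RInt g (fun z => RInt g a z) a).
    + apply filter_forall. intros c. exact (RInt_correct g a c (g_ex a c)).
    + apply g_cont.
  - rewrite g_int. apply (RInt_point (V := R_CompleteNormedModule)).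
Qed.

Lemma RInt_derive_eq0 (f df : R -> R) a b :
  (forall t, is_derive f t (df t)) -> (forall t, continuous df t) ->
  f a = f b -> RInt df a b = 0.
Proof.
  intros f_der df_cont fab. apply is_RInt_unique.
  replace 0 with (minus (f b) (f a)) by (rewrite fab; apply (minus_eq_zero (G := R_AbelianGroup))).
  apply (is_RInt_derive f df); intros t _; [apply f_der | apply df_cont].
Qed.

Lemma is_derive_RInt_slice (P Px : R -> R -> R) a b x :
  (forall x y, is_derive (fun z => P z y) x (Px x y)) ->
  (forall x y, continuity_2d_pt P x y) -> (forall x y, continuity_2d_pt Px x y) ->
  is_derive (fun z => RInt (fun t => P z t) a b) x (RInt (fun t => Px x t) a b).
Proof.
  intros P_der P_cont Px_cont.
  rewrite (RInt_ext (fun t => Px x t) (fun t => Derive (fun z => P z t) x))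
    by (intros t _; symmetry; apply is_derive_unique, P_der).
  apply (is_derive_RInt_param P).
  - apply filter_forall. intros z t _. exists (Px z t). apply P_der.
  - intros t _. apply (continuity_2d_pt_ext Px); [|apply Px_cont].
    intros c d. symmetry. apply is_derive_unique, P_der.
  - apply filter_forall. intros z. apply ex_RInt_slice, P_cont.
Qed.

Lemma square_div_nonneg_eq0 (P Q Px Qy : R -> R -> R) K :
  (forall x y, is_derive (fun z => P z y) x (Px x y)) ->
  (forall x y, is_derive (fun z => Q x z) y (Qy x y)) ->
  (forall x y, continuity_2d_pt P x y) ->
  (forall x y, continuity_2d_pt Px x y) ->
  (forall x y, continuity_2d_pt Qy x y) ->
  (forall y, P (- K) y = 0 /\ P K y = 0) ->
  (forall x, Q x (- K) = 0 /\ Q x K = 0) ->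
  (forall x y, 0 <= Px x y + Qy x y) ->
  forall x y, - K < x < K -> - K < y < K -> Px x y + Qy x y = 0.
Proof.
  intros P_der Q_der P_cont Px_cont Qy_cont P_ends Q_ends div_ge0 x y x_in y_in.
  set (div := fun a b => Px a b + Qy a b).
  assert (div_cont : forall a b, continuity_2d_pt div a b).
  { intros a b. apply continuity_2d_pt_plus; auto. }
  assert (RInt_div : forall a, RInt (fun t => div a t) (- K) K = RInt (fun t => Px a t) (- K) K).
  { intros a. unfold div.
    rewrite (RInt_plus (V := R_CompleteNormedModule) (fun t => Px a t) (fun t => Qy a t))
      by (apply ex_RInt_slice; intros; auto).
    rewrite (RInt_derive_eq0 (fun t => Q a t) (fun t => Qy a t)).
    - apply Rplus_0_r.
    - apply Q_der.
    - intros t. apply continuity_2d_pt_slice, Qy_cont.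
    - rewrite (proj1 (Q_ends a)), (proj2 (Q_ends a)). reflexivity. }
  assert (div_int : RInt (fun t => div x t) (- K) K = 0).
  { apply (nondecreasing_equal_ends_derive_eq0 (fun z => RInt (fun t => P z t) (- K) K)
      (fun z => RInt (fun t => div z t) (- K) K) (- K) K x); [| | |exact x_in].
    - intros a. rewrite RInt_div. apply is_derive_RInt_slice; assumption.
    - intros a. apply RInt_ge_0; [lra | apply ex_RInt_slice, div_cont | intros; apply div_ge0].
    - rewrite (RInt_ext (fun t => P (- K) t) (fun _ => 0)),
        (RInt_ext (fun t => P K t) (fun _ => 0)); [reflexivity | intros; apply P_ends..]. }
  apply (RInt_nonneg_eq0 (fun t => div x t) (- K) K y); auto.
  - intros t. apply continuity_2d_pt_slice, div_cont.
  - intros t. apply div_ge0.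
Qed.

Definition fld_x (w : pt -> R) (p : pt) : R := dx w p - snd p.
Definition fld_y (w : pt -> R) (p : pt) : R := dy w p + fst p.

(* No nondegeneracy hypothesis is needed: if a = 0 the conclusion holds whatever
   a1 / 0 is. *)
Lemma cross_eq_of_normalized_eq (a1 a2 b1 b2 : R) :
  a1 / sqrt (a1 ^ 2 + a2 ^ 2) = b1 / sqrt (b1 ^ 2 + b2 ^ 2) ->
  a2 / sqrt (a1 ^ 2 + a2 ^ 2) = b2 / sqrt (b1 ^ 2 + b2 ^ 2) ->
  a1 * b2 = a2 * b1.
Proof.
  intros E1 E2.
  destruct (Req_dec (sqrt (a1 ^ 2 + a2 ^ 2)) 0) as [ra0|ra0].
  - apply sqrt_eq_0 in ra0; [|nra].
    assert (a1 = 0) by nra. assert (a2 = 0) by nra. subst. ring.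
  - set (ra := sqrt (a1 ^ 2 + a2 ^ 2)) in *. set (rb := sqrt (b1 ^ 2 + b2 ^ 2)) in *.
    clearbody ra rb.
    replace a1 with (ra * (a1 / ra)) by (field; exact ra0).
    replace a2 with (ra * (a2 / ra)) at 1 by (field; exact ra0).
    rewrite E1, E2. unfold Rdiv. ring.
Qed.

Lemma fld_cross_eq (O : pt -> Prop) (u v : pt -> R) :
  (forall p, O p -> ~ Sset u p -> ~ Sset v p -> Nfield u p = Nfield v p) ->
  forall p, O p -> fld_x u p * fld_y v p = fld_y u p * fld_x v p.
Proof.
  intros N_eq p Op.
  destruct (classic (Sset u p)) as [[Su1 Su2]|Su].
  { unfold fld_x, fld_y. rewrite Su1, Su2. ring. }
  destruct (classic (Sset v p)) as [[Sv1 Sv2]|Sv].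
  { unfold fld_x, fld_y. rewrite Sv1, Sv2. ring. }
  pose proof (N_eq p Op Su Sv) as E.
  exact (cross_eq_of_normalized_eq _ _ _ _ (f_equal fst E) (f_equal snd E)).
Qed.

Lemma dx_dy_comm (O : pt -> Prop) (u : pt -> R) p :
  open2 O -> C2_on O u -> O p -> dx (dy u) p = dy (dx u) p.
Proof.
  intros O_open u_C2 Op. destruct p as [x y].
  destruct (O_open _ Op) as [r [r_pos ball_O]].
  destruct (u_C2 _ Op) as (_ & _ & _ & _ & _ & _ & _ & _ & _ & _ & c_dydx & c_dxdy & _).
  apply (Schwarz (fun a b => u (a, b)) x y).
  - apply (locally_2d_of_ball
      (fun q => ex_dx u q /\ ex_dy u q /\ ex_dx (dy u) q /\ ex_dy (dx u) q) x y r r_pos).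
    intros q Hq. destruct (u_C2 q (ball_O q Hq)) as (? & ? & _ & ? & ? & _). tauto.
  - exact (continuity_2d_pt_of_cont_at _ _ _ c_dxdy).
  - exact (continuity_2d_pt_of_cont_at _ _ _ c_dydx).
Qed.

Lemma diff_small_near_compl (O : pt -> Prop) (u v : pt -> R) e p :
  C0_closure O u -> C0_closure O v -> (forall q, boundary2 O q -> u q = v q) ->
  0 < e -> ~ O p ->
  exists r, 0 < r /\ forall q, O q -> dist2 p q < r -> Rabs (u q - v q) < e.
Proof.
  intros u_C0 v_C0 uv_bd e_pos Op.
  destruct (classic (closure2 O p)) as [Cp|Cp].
  - assert (uv_p : u p = v p) by (apply uv_bd; split; assumption).
    destruct (u_C0 p Cp (e / 2) ltac:(lra)) as [du [du_pos Hu]].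
    destruct (v_C0 p Cp (e / 2) ltac:(lra)) as [dv [dv_pos Hv]].
    exists (Rmin du dv). split; [now apply Rmin_pos|]. intros q Oq Hq.
    assert (Cq : closure2 O q).
    { intros eps eps_pos. exists q. rewrite dist2_diag. auto. }
    pose proof (Hu q Cq (Rlt_le_trans _ _ _ Hq (Rmin_l du dv))) as Hu'.
    pose proof (Hv q Cq (Rlt_le_trans _ _ _ Hq (Rmin_r du dv))) as Hv'.
    rewrite uv_p in Hu'. apply Rabs_def2 in Hu', Hv'. apply Rabs_def1; lra.
  - apply not_all_ex_not in Cp as [r Hr]. apply imply_to_and in Hr as [r_pos no_q].
    exists r. split; [exact r_pos|]. intros q Oq Hq. exfalso. apply no_q. exists q. auto.
Qed.

Lemma bounded2_open_square (O : pt -> Prop) :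
  bounded2 O -> exists K, forall p, O p -> - K < fst p < K /\ - K < snd p < K.
Proof.
  intros [M HM]. exists (Rabs M + 1). intros p Op.
  destruct (HM p Op) as [Hx Hy]. pose proof (Rle_abs M).
  apply Rabs_le_between in Hx, Hy. lra.
Qed.

Lemma is_derive_comp_mul (phi dphi U A : R -> R) x dU dA :
  (forall t, is_derive phi t (dphi t)) -> is_derive U x dU -> is_derive A x dA ->
  is_derive (fun z => phi (U z) * A z) x (dphi (U x) * dU * A x + phi (U x) * dA).
Proof.
  intros phi_der U_der A_der.
  replace (dphi (U x) * dU * A x + phi (U x) * dA)
    with (plus (mult (scal dU (dphi (U x))) (A x)) (mult (phi (U x)) dA))
    by (unfold plus, mult, scal; simpl; unfold mult; simpl; ring).
  apply (is_derive_mult (fun z => phi (U z)) A); [| exact A_der | intros; apply Rmult_comm].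
  exact (is_derive_comp phi U x _ _ (phi_der (U x)) U_der).
Qed.

Lemma is_derive_fld_y (u : pt -> R) x y : ex_dx (dy u) (x, y) ->
  is_derive (fun z => fld_y u (z, y)) x (dx (dy u) (x, y) + 1).
Proof.
  intros uyx. apply (is_derive_plus (fun z => dy u (z, y)) (fun z => z)).
  - exact (Derive_correct _ _ uyx).
  - apply (is_derive_id (K := R_AbsRing)).
Qed.

Lemma is_derive_opp_fld_x (u : pt -> R) x y : ex_dy (dx u) (x, y) ->
  is_derive (fun z => - fld_x u (x, z)) y (- (dy (dx u) (x, y) - 1)).
Proof.
  intros uxy. apply (is_derive_opp (fun z => fld_x u (x, z))).
  apply (is_derive_minus (fun z => dx u (x, z)) (fun z => z)).
  - exact (Derive_correct _ _ uxy).
  - apply (is_derive_id (K := R_AbsRing)).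
Qed.

Section Cutoff.

Variables (O : pt -> Prop) (u v : pt -> R).
Hypotheses (O_open : open2 O) (O_bounded : bounded2 O)
  (u_C2 : C2_on O u) (v_C2 : C2_on O v) (u_C0 : C0_closure O u) (v_C0 : C0_closure O v)
  (uv_boundary : forall p, boundary2 O p -> u p = v p)
  (fld_parallel : forall p, O p -> fld_x u p * fld_y v p = fld_y u p * fld_x v p).

Variables (phi dphi : R -> R) (e : R).
Hypotheses (phi_derive : forall t, is_derive phi t (dphi t))
  (dphi_cont : forall t, continuous dphi t) (phi_ge0 : forall t, 0 <= phi t)
  (e_pos : 0 < e) (phi_small : forall t, Rabs t < e -> phi t = 0).

Let flux_x (p : pt) : R := phi (u p - v p) * fld_y u p.
Let flux_y (p : pt) : R := phi (u p - v p) * - fld_x u p.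
Let flux_x_dx (p : pt) : R :=
  dphi (u p - v p) * (dx u p - dx v p) * fld_y u p + phi (u p - v p) * (dx (dy u) p + 1).
Let flux_y_dy (p : pt) : R :=
  dphi (u p - v p) * (dy u p - dy v p) * - fld_x u p + phi (u p - v p) * - (dy (dx u) p - 1).

Lemma phi_continuity t : continuity_pt phi t.
Proof.
  apply continuity_pt_filterlim.
  exact (ex_derive_continuous phi t (ex_intro _ _ (phi_derive t))).
Qed.

Lemma dphi_continuity t : continuity_pt dphi t.
Proof. apply continuity_pt_filterlim, dphi_cont. Qed.

Lemma dphi_small t : Rabs t < e -> dphi t = 0.
Proof.
  intros t_small. rewrite <- (is_derive_unique _ _ _ (phi_derive t)).
  apply is_derive_unique, (is_derive_ext_loc (fun _ => 0));
    [|apply (is_derive_const (V := R_NormedModule))].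
  exists (mkposreal (e - Rabs t) ltac:(lra)). intros s Hs.
  change (Rabs (s - t) < e - Rabs t) in Hs.
  pose proof (Rabs_triang_inv s t). symmetry. apply phi_small. lra.
Qed.

Lemma cutoff_vanishes_near_compl (f : pt -> R) :
  (forall q, phi (u q - v q) = 0 -> dphi (u q - v q) = 0 -> f q = 0) ->
  vanishes_near_compl O f.
Proof.
  intros f_zero p Op.
  destruct (diff_small_near_compl O u v e p u_C0 v_C0 uv_boundary e_pos Op) as [r [r_pos Hr]].
  exists r. split; [exact r_pos|]. intros q Oq Hq.
  apply f_zero; [apply phi_small | apply dphi_small]; exact (Hr q Oq Hq).
Qed.

Lemma is_derive_flux_x x y : O (x, y) ->
  is_derive (fun z => flux_x (z, y)) x (flux_x_dx (x, y)).
Proof.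
  intros Op. destruct (u_C2 _ Op) as (ux & _ & _ & _ & uyx & _).
  destruct (v_C2 _ Op) as (vx & _).
  apply (is_derive_comp_mul phi dphi (fun z => u (z, y) - v (z, y)) (fun z => fld_y u (z, y)));
    [exact phi_derive | |].
  - apply (is_derive_minus (fun z => u (z, y)) (fun z => v (z, y)));
      apply Derive_correct; assumption.
  - apply is_derive_fld_y, uyx.
Qed.

Lemma is_derive_flux_y x y : O (x, y) ->
  is_derive (fun z => flux_y (x, z)) y (flux_y_dy (x, y)).
Proof.
  intros Op. destruct (u_C2 _ Op) as (_ & uy & _ & uxy & _).
  destruct (v_C2 _ Op) as (_ & vy & _).
  apply (is_derive_comp_mul phi dphi (fun z => u (x, z) - v (x, z)) (fun z => - fld_x u (x, z)));
    [exact phi_derive | |].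
  - apply (is_derive_minus (fun z => u (x, z)) (fun z => v (x, z)));
      apply Derive_correct; assumption.
  - apply is_derive_opp_fld_x, uxy.
Qed.

Lemma flux_divergence p : O p -> flux_x_dx p + flux_y_dy p = 2 * phi (u p - v p).
Proof.
  intros Op. unfold flux_x_dx, flux_y_dy. rewrite (dx_dy_comm O u p O_open u_C2 Op).
  transitivity (dphi (u p - v p) * (fld_x u p * fld_y v p - fld_y u p * fld_x v p)
                + 2 * phi (u p - v p)); [unfold fld_x, fld_y; ring|].
  rewrite (fld_parallel p Op). ring.
Qed.

Ltac continuity_2d :=
  repeat first
    [ apply continuity_2d_pt_plus | apply continuity_2d_pt_minus
    | apply continuity_2d_pt_mult | apply continuity_2d_pt_opp
    | apply continuity_2d_pt_id1 | apply continuity_2d_pt_id2 | apply continuity_2d_pt_const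
    | apply continuity_1d_2d_pt_comp; [first [apply phi_continuity | apply dphi_continuity] |]
    | apply continuity_2d_pt_of_cont_at; assumption ].

Lemma continuity_2d_pt_fluxes x y : O (x, y) ->
  continuity_2d_pt (fun a b => flux_x (a, b)) x y /\
  continuity_2d_pt (fun a b => flux_x_dx (a, b)) x y /\
  continuity_2d_pt (fun a b => flux_y_dy (a, b)) x y.
Proof.
  intros Op.
  destruct (u_C2 _ Op) as (_ & _ & _ & _ & _ & _ & cu & cux & cuy & _ & cuxy & cuyx & _).
  destruct (v_C2 _ Op) as (_ & _ & _ & _ & _ & _ & cv & cvx & cvy & _).
  unfold flux_x, flux_x_dx, flux_y_dy, fld_x, fld_y; cbn [fst snd].
  repeat split; continuity_2d.
Qed.

Lemma fluxes_vanish_near_compl :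
  vanishes_near_compl O flux_x /\ vanishes_near_compl O flux_y /\
  vanishes_near_compl O flux_x_dx /\ vanishes_near_compl O flux_y_dy.
Proof.
  repeat split; apply cutoff_vanishes_near_compl; intros q E E';
    unfold flux_x, flux_y, flux_x_dx, flux_y_dy; rewrite E, ?E'; ring.
Qed.

Lemma zero_ext_divergence_ge0 a b :
  0 <= zero_ext O flux_x_dx (a, b) + zero_ext O flux_y_dy (a, b).
Proof.
  destruct (classic (O (a, b))) as [Oab|Oab].
  - rewrite !zero_ext_in, flux_divergence by exact Oab. apply Rmult_le_pos; [lra | apply phi_ge0].
  - rewrite !zero_ext_out by exact Oab. lra.
Qed.

Lemma cutoff_diff_eq0 p : O p -> phi (u p - v p) = 0.
Proof.
  intros Op. destruct (bounded2_open_square O O_bounded) as [K O_square].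
  destruct fluxes_vanish_near_compl as (van_x & van_y & van_x_dx & van_y_dy).
  assert (out_square : forall a b, ~ (- K < a < K /\ - K < b < K) -> ~ O (a, b)).
  { intros a b Hab Oab. exact (Hab (O_square _ Oab)). }
  destruct p as [x y]. destruct (O_square _ Op) as [x_in y_in].
  enough (div_xy : zero_ext O flux_x_dx (x, y) + zero_ext O flux_y_dy (x, y) = 0).
  { rewrite !zero_ext_in, flux_divergence in div_xy by exact Op. lra. }
  apply (square_div_nonneg_eq0
    (fun a b => zero_ext O flux_x (a, b)) (fun a b => zero_ext O flux_y (a, b))
    (fun a b => zero_ext O flux_x_dx (a, b)) (fun a b => zero_ext O flux_y_dy (a, b)) K);
    auto using zero_ext_divergence_ge0.
  - intros a b. apply (is_derive_zero_ext_along O flux_x flux_x_dx (fun z => (z, b)));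
      [exact O_open | exact van_x | apply dist2_along_fst | apply is_derive_flux_x].
  - intros a b. apply (is_derive_zero_ext_along O flux_y flux_y_dy (fun z => (a, z)));
      [exact O_open | exact van_y | apply dist2_along_snd | apply is_derive_flux_y].
  - intros a b. apply continuity_2d_pt_zero_ext; auto.
    intros c d Ocd. exact (proj1 (continuity_2d_pt_fluxes c d Ocd)).
  - intros a b. apply continuity_2d_pt_zero_ext; auto.
    intros c d Ocd. exact (proj1 (proj2 (continuity_2d_pt_fluxes c d Ocd))).
  - intros a b. apply continuity_2d_pt_zero_ext; auto.
    intros c d Ocd. exact (proj2 (proj2 (continuity_2d_pt_fluxes c d Ocd))).
  - intros b. split; apply zero_ext_out, out_square; lra.
  - intros a. split; apply zero_ext_out, out_square; lra.
Qed.

End Cutoff.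

Definition ramp_sq (e t : R) : R := Rmax 0 (t - e) ^ 2.

Lemma ramp_sq_ge0 e t : 0 <= ramp_sq e t.
Proof. unfold ramp_sq. nra. Qed.

Lemma ramp_sq_eq0 e t : t <= e -> ramp_sq e t = 0.
Proof. intros Ht. unfold ramp_sq. rewrite Rmax_left by lra. ring. Qed.

Lemma ramp_sq_eq0_le e t : ramp_sq e t = 0 -> t <= e.
Proof.
  unfold ramp_sq. intros E. apply Rnot_lt_le. intros Ht.
  rewrite Rmax_right in E by lra. nra.
Qed.

Lemma Rmax_0_abs s : Rmax 0 s = (s + Rabs s) / 2.
Proof.
  destruct (Rle_dec 0 s).
  - rewrite Rmax_right, Rabs_right by lra. field.
  - rewrite Rmax_left, Rabs_left by lra. field.
Qed.

Lemma is_derive_ramp_sq e t : is_derive (ramp_sq e) t (2 * Rmax 0 (t - e)).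
Proof.
  destruct (Rtotal_order t e) as [Hlt|[Heq|Hgt]].
  - rewrite Rmax_left by lra. replace (2 * 0) with 0 by ring.
    apply (is_derive_ext_loc (fun _ => 0)); [|apply (is_derive_const (V := R_NormedModule))].
    exists (mkposreal (e - t) ltac:(lra)). intros s Hs.
    change (Rabs (s - t) < e - t) in Hs. apply Rabs_def2 in Hs.
    symmetry. apply ramp_sq_eq0. lra.
  - subst t. rewrite Rminus_diag, Rmax_left by lra. replace (2 * 0) with 0 by ring.
    apply is_derive_Reals. intros eps eps_pos.
    exists (mkposreal eps eps_pos). intros h h_nz Hh. simpl in Hh.
    unfold ramp_sq. replace (e + h - e) with h by ring. rewrite Rminus_diag, (Rmax_left 0 0) by lra.
    destruct (Rle_dec 0 h).
    + rewrite Rmax_right by lra. replace ((h ^ 2 - 0 ^ 2) / h - 0) with h by (field; exact h_nz).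
      exact Hh.
    + rewrite Rmax_left by lra. replace ((0 ^ 2 - 0 ^ 2) / h - 0) with 0 by (field; exact h_nz).
      rewrite Rabs_R0. exact eps_pos.
  - rewrite Rmax_right by lra.
    apply (is_derive_ext_loc (fun s => (s - e) ^ 2)).
    + exists (mkposreal (t - e) ltac:(lra)). intros s Hs.
      change (Rabs (s - t) < t - e) in Hs. apply Rabs_def2 in Hs.
      unfold ramp_sq. rewrite Rmax_right by lra. reflexivity.
    + auto_derive; [exact I | ring].
Qed.

Lemma continuous_ramp_sq_deriv e t : continuous (fun s => 2 * Rmax 0 (s - e)) t.
Proof.
  assert (shift_cont : continuous (fun s : R => s - e) t).
  { apply (continuous_minus (V := R_NormedModule) (fun s : R => s) (fun _ => e));
      [apply continuous_id | apply continuous_const]. }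
  apply (continuous_ext (fun s : R => (s - e) + Rabs (s - e))).
  { intros s. change (s - e + Rabs (s - e) = 2 * Rmax 0 (s - e)). rewrite Rmax_0_abs. field. }
  apply (continuous_plus (V := R_NormedModule) (fun s : R => s - e) (fun s => Rabs (s - e)));
    [|apply continuous_Rabs_comp]; exact shift_cont.
Qed.

Lemma le_of_fld_parallel (O : pt -> Prop) (u v : pt -> R) :
  open2 O -> bounded2 O -> C2_on O u -> C2_on O v -> C0_closure O u -> C0_closure O v ->
  (forall p, boundary2 O p -> u p = v p) ->
  (forall p, O p -> fld_x u p * fld_y v p = fld_y u p * fld_x v p) ->
  forall p, O p -> u p <= v p.
Proof.
  intros O_open O_bounded u_C2 v_C2 u_C0 v_C0 uv_boundary fld_parallel p Op.
  apply Rle_plus_epsilon. intros e e_pos.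
  enough (ramp_sq e (u p - v p) = 0) as E by (apply ramp_sq_eq0_le in E; lra).
  apply (cutoff_diff_eq0 O u v O_open O_bounded u_C2 v_C2 u_C0 v_C0 uv_boundary fld_parallel
           (ramp_sq e) (fun t => 2 * Rmax 0 (t - e)) e); auto.
  - apply is_derive_ramp_sq.
  - apply continuous_ramp_sq_deriv.
  - apply ramp_sq_ge0.
  - intros t Ht. apply ramp_sq_eq0. apply Rabs_def2 in Ht. lra.
Qed.

Theorem lemma5p3 (Omega : pt -> Prop) (u v : pt -> R) :
  domain2 Omega -> bounded2 Omega ->
  C2_on Omega u -> C0_closure Omega u ->
  C2_on Omega v -> C0_closure Omega v ->
  (forall p, Omega p -> ~ Sset u p -> ~ Sset v p -> Nfield u p = Nfield v p) ->
  (forall p, boundary2 Omega p -> u p = v p) ->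
  forall p, Omega p -> u p = v p.
Proof.
  intros [_ [Omega_open _]] Omega_bounded u_C2 u_C0 v_C2 v_C0 N_eq uv_boundary p Op.
  assert (N_sym : forall q, Omega q -> ~ Sset v q -> ~ Sset u q -> Nfield v q = Nfield u q)
    by (intros q Oq Sv Su; symmetry; auto).
  assert (vu_boundary : forall q, boundary2 Omega q -> v q = u q)
    by (intros q Bq; symmetry; auto).
  apply Rle_antisym; apply le_of_fld_parallel with Omega; auto.
  - exact (fld_cross_eq Omega u v N_eq).
  - exact (fld_cross_eq Omega v u N_sym).
Qed.
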